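(* Let $f:[0,1]\to[0,1]$ be a surjective continuous function that does not admit a splitting sequence. If $f$ admits two distinct 2-cycles $\{s,t\}$ and $\{u,v\}$ with $s<t$ and $u<v$, then either $s<u<v<t$ or $u<s<t<v$.
   Context: A 2-cycle is a set $\{s,t\}$ with $s\ne t$, $f(s)=t$, $f(t)=s$. A sequence $(T_n)_{n\in\mathbb N}$ of closed intervals $T_n\subsetneq[0,1]$ (possibly degenerate) is tight if $f(T_{n+1})=T_n$ for every $n$ and $T_n$ is nondegenerate for all sufficiently large $n$. A tight sequence $(T_n)$, $T_n=[l_n,r_n]$, is a splitting sequence admitted by $f$ if there are an infinite set $N\subseteq\mathbb N$ and nondegenerate closed intervals $S_n\subseteq[0,1]$ ($n\in N$) with $S_n\cap T_n\subseteq\{l_n,r_n\}$ and $f(S_n)=f(T_n)$ for all $n\in N$. *)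

From Stdlib Require Import Reals.
Open Scope R_scope.

Definition inI (a b x : R) : Prop := a <= x <= b.

Definition self_map01 (f : R -> R) : Prop :=
  forall x, inI 0 1 x -> inI 0 1 (f x).
Definition continuous01 (f : R -> R) : Prop :=
  forall x, inI 0 1 x -> continuity_pt (fun y => f (Rmin 1 (Rmax 0 y))) x.
Definition surjective01 (f : R -> R) : Prop :=
  forall y, inI 0 1 y -> exists x, inI 0 1 x /\ f x = y.

Definition image_eq (f : R -> R) (a b c d : R) : Prop :=
  forall y, (exists x, inI a b x /\ f x = y) <-> inI c d y.

Definition proper_subinterval (l r : R) : Prop :=
  0 <= l /\ l <= r /\ r <= 1 /\ ~ (l = 0 /\ r = 1).

Definition tight (f : R -> R) (l r : nat -> R) : Prop :=
  (forall n, proper_subinterval (l n) (r n)) /\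
  (forall n, image_eq f (l (S n)) (r (S n)) (l n) (r n)) /\
  (exists N, forall n, (N <= n)%nat -> l n < r n).

Definition splitting_sequence (f : R -> R) (l r : nat -> R) : Prop :=
  tight f l r /\
  exists (Nset : nat -> Prop) (a b : nat -> R),
    (forall m, exists n, (m <= n)%nat /\ Nset n) /\
    (forall n, Nset n ->
       0 <= a n /\ a n < b n /\ b n <= 1 /\
       (forall x, inI (a n) (b n) x -> inI (l n) (r n) x -> x = l n \/ x = r n) /\
       (forall y, (exists x, inI (a n) (b n) x /\ f x = y) <->
                  (exists x, inI (l n) (r n) x /\ f x = y))).

Definition admits_splitting_sequence (f : R -> R) : Prop :=
  exists l r : nat -> R, splitting_sequence f l r.

Definition two_cycle (f : R -> R) (s t : R) : Prop :=
  inI 0 1 s /\ inI 0 1 t /\ s <> t /\ f s = t /\ f t = s.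

(* If two distinct 2-cycles s < t and u < v are not nested, they are either
   separated (t < u) or interleaved (s < u < t < v).  In both cases there are
   nondegenerate intervals P, Q with f(P) covering Q and f(Q) covering P, and an
   interval M meeting P and Q only in endpoints with f(M) covering both:
   P = Q = [s,t], M = [t,u] in the separated case and P = [s,u], Q = [t,v],
   M = [u,t] in the interleaved one.  A continuous map that takes the values
   c < d on an interval maps some subinterval exactly onto [c,d] (between a
   last c-point and the next d-point), so pulling back alternately through P
   and Q gives a tight sequence, and exact pullbacks into M split it. *)
From Stdlib Require Import Reals Lra Ranalysis5 Classical ClassicalEpsilon ChoiceFacts.
Open Scope R_scope.

Lemma clamp01_id x : inI 0 1 x -> Rmin 1 (Rmax 0 x) = x.
Proof. unfold inI; intros Hx; rewrite Rmax_right, Rmin_right; lra. Qed.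

Lemma ivt_sign (h : R -> R) p q :
  (forall a, p <= a <= q -> continuity_pt h a) -> p <= q -> h p * h q <= 0 ->
  exists z, p <= z <= q /\ h z = 0.
Proof.
  intros Hh Hpq Hsign.
  destruct (Req_dec (h p) 0) as [Hp | Hp]; [exists p; split; [lra | easy] |].
  destruct (Req_dec (h q) 0) as [Hq | Hq]; [exists q; split; [lra | easy] |].
  assert (Hlt : p < q) by (destruct (Req_dec p q); [subst; nra | lra]).
  destruct (Rlt_or_le (h p) 0) as [Hneg | Hpos].
  - destruct (IVT_interv h p q Hh Hlt Hneg) as [z Hz]; [nra | now exists z].
  - destruct (IVT_interv (fun x => - h x) p q) as [z [Hz Hhz]]; try easy; try nra.
    + intros a Ha; apply continuity_pt_opp, Hh, Ha.
    + exists z; split; [easy | lra].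
Qed.

Lemma continuous01_ivt f p q y :
  continuous01 f -> 0 <= p -> p <= q -> q <= 1 ->
  (f p - y) * (f q - y) <= 0 -> exists z, p <= z <= q /\ f z = y.
Proof.
  intros Hf H0 Hpq H1 Hy.
  destruct (ivt_sign (fun x => f (Rmin 1 (Rmax 0 x)) - y) p q) as [z [Hz Hgz]]; try easy.
  - intros a Ha; apply continuity_pt_minus, continuity_pt_const; [| easy].
    apply Hf; unfold inI; lra.
  - rewrite !clamp01_id by (unfold inI; lra); exact Hy.
  - exists z; split; [easy |]; rewrite clamp01_id in Hgz by (unfold inI; lra); lra.
Qed.

Lemma continuous01_ivt_between f p q y :
  continuous01 f -> inI 0 1 p -> inI 0 1 q -> (f p < y < f q \/ f q < y < f p) ->
  exists z, (p < z < q \/ q < z < p) /\ f z = y.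
Proof.
  unfold inI; intros Hf Hp Hq Hy.
  assert (Hz : exists z, (p <= z <= q \/ q <= z <= p) /\ f z = y).
  { destruct (Rle_or_lt p q).
    - destruct (continuous01_ivt f p q y Hf ltac:(lra) ltac:(lra) ltac:(lra) ltac:(nra))
        as [z Hz]; exists z; tauto.
    - destruct (continuous01_ivt f q p y Hf ltac:(lra) ltac:(lra) ltac:(lra) ltac:(nra))
        as [z Hz]; exists z; tauto. }
  destruct Hz as [z [Hz Hfz]].
  assert (z <> p) by (intros ->; lra).
  assert (z <> q) by (intros ->; lra).
  exists z; split; [lra | easy].
Qed.

Lemma continuous01_level_avoid f c m :
  continuous01 f -> inI 0 1 m -> f m <> c ->
  exists d, 0 < d /\ forall x, inI 0 1 x -> Rabs (x - m) < d -> f x <> c.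
Proof.
  intros Hf Hm Hfm.
  destruct (Hf m Hm (Rabs (f m - c))) as [d [Hd Hnear]].
  { apply Rabs_pos_lt; lra. }
  exists d; split; [easy |]; intros x Hx Hxm Hfx.
  destruct (Req_dec x m) as [-> | Hneq]; [easy |].
  specialize (Hnear x (conj (conj I (not_eq_sym Hneq)) Hxm)).
  simpl in Hnear; unfold Rdist in Hnear.
  rewrite !clamp01_id, Hfx, Rabs_minus_sym in Hnear by easy; lra.
Qed.

Definition closed_within (p q : R) (E : R -> Prop) : Prop :=
  forall m, p <= m <= q -> ~ E m -> exists d, 0 < d /\ forall x, E x -> d <= Rabs (x - m).

Lemma closed_bounded_max (E : R -> Prop) p q :
  (forall x, E x -> p <= x <= q) -> (exists x, E x) ->
  closed_within p q E ->
  exists m, E m /\ forall x, E x -> x <= m.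
Proof.
  intros Hbnd Hne Hclosed.
  destruct (completeness E) as [m [Hub Hleast]].
  { exists q; intros x Hx; apply Hbnd, Hx. }
  { exact Hne. }
  exists m; split; [| exact Hub].
  destruct Hne as [x0 Hx0].
  assert (Hm : p <= m <= q).
  { split.
    - apply Rle_trans with x0; [apply Hbnd, Hx0 | apply Hub, Hx0].
    - apply Hleast; intros x Hx; apply Hbnd, Hx. }
  apply NNPP; intros HEm.
  destruct (Hclosed m Hm HEm) as [d [Hd Hfar]].
  assert (m <= m - d); [| lra].
  apply Hleast; intros x Hx.
  specialize (Hub x Hx); specialize (Hfar x Hx).
  rewrite Rabs_left1 in Hfar by lra; lra.
Qed.

Lemma closed_bounded_min (E : R -> Prop) p q :
  (forall x, E x -> p <= x <= q) -> (exists x, E x) ->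
  closed_within p q E ->
  exists m, E m /\ forall x, E x -> m <= x.
Proof.
  intros Hbnd [x0 Hx0] Hclosed.
  destruct (closed_bounded_max (fun x => E (- x)) (- q) (- p)) as [m [Hm Hmax]].
  - intros x Hx; specialize (Hbnd _ Hx); lra.
  - exists (- x0); rewrite Ropp_involutive; exact Hx0.
  - intros m Hm HEm.
    destruct (Hclosed (- m)) as [d [Hd Hfar]]; [lra | easy |].
    exists d; split; [easy |]; intros x Hx.
    specialize (Hfar _ Hx); rewrite <- Rabs_Ropp.
    replace (- (x - m)) with (- x - - m) by ring; exact Hfar.
  - exists (- m); split; [exact Hm |]; intros x Hx.
    assert (- x <= m) by (apply Hmax; rewrite Ropp_involutive; exact Hx); lra.
Qed.

Section LevelSets.

Variables (f : R -> R) (p q c : R).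
Hypotheses (Hf : continuous01 f) (Hp : 0 <= p) (Hq : q <= 1).

Let level x := p <= x <= q /\ f x = c.

Lemma level_set_closed : closed_within p q level.
Proof.
  intros m Hm Hnot.
  destruct (continuous01_level_avoid f c m Hf) as [d [Hd Havoid]].
  - unfold inI; lra.
  - intros Hfm; apply Hnot; split; easy.
  - exists d; split; [easy |]; intros x [Hx Hfx].
    apply Rnot_lt_le; intros Hnear; apply (Havoid x); [unfold inI; lra | easy | easy].
Qed.

Lemma level_set_max :
  (exists x, level x) -> exists m, level m /\ forall x, level x -> x <= m.
Proof.
  intros Hne; apply (closed_bounded_max level p q); [| easy | exact level_set_closed].
  intros x Hx; apply Hx.
Qed.

Lemma level_set_min :
  (exists x, level x) -> exists m, level m /\ forall x, level x -> m <= x.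
Proof.
  intros Hne; apply (closed_bounded_min level p q); [| easy | exact level_set_closed].
  intros x Hx; apply Hx.
Qed.

End LevelSets.

Lemma level_gap f x1 x2 y1 y2 :
  continuous01 f -> 0 <= x1 -> x1 < x2 -> x2 <= 1 -> f x1 = y1 -> f x2 = y2 -> y1 <> y2 ->
  exists a b, x1 <= a /\ a < b /\ b <= x2 /\ f a = y1 /\ f b = y2 /\
    forall x, a < x < b -> f x <> y1 /\ f x <> y2.
Proof.
  intros Hf H0 H12 H1 Hf1 Hf2 Hy.
  destruct (level_set_max f x1 x2 y1 Hf H0 H1) as [a [[Ha Hfa] Hlast]].
  { exists x1; split; [lra | easy]. }
  assert (a <> x2) by (intros ->; congruence).
  destruct (level_set_min f a x2 y2 Hf ltac:(lra) H1) as [b [[Hb Hfb] Hfirst]].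
  { exists x2; split; [lra | easy]. }
  assert (a <> b) by (intros ->; congruence).
  exists a, b; split; [lra | split; [lra | split; [lra | split; [easy | split; [easy |]]]]].
  intros x Hx; split; intros Hfx.
  - assert (x <= a) by (apply Hlast; split; [lra | easy]); lra.
  - assert (b <= x) by (apply Hfirst; split; [lra | easy]); lra.
Qed.

Lemma image_eq_of_gap f a b c d :
  continuous01 f -> 0 <= a -> a < b -> b <= 1 -> c < d ->
  (f a = c /\ f b = d \/ f a = d /\ f b = c) ->
  (forall x, a < x < b -> f x <> c /\ f x <> d) ->
  image_eq f a b c d.
Proof.
  intros Hf H0 Hab H1 Hcd Hend Hgap.
  assert (Hends : exists ec ed, inI 0 1 ec /\ f ec = c /\ inI 0 1 ed /\ f ed = d /\
                                a <= ec <= b /\ a <= ed <= b).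
  { unfold inI; destruct Hend as [[? ?] | [? ?]]; [exists a, b | exists b, a]; lra. }
  destruct Hends as [ec [ed [Hec [Hfec [Hed [Hfed Hin]]]]]].
  assert (Hinside : forall x, a < x < b -> c <= f x <= d).
  { intros x Hx.
    assert (Hx01 : inI 0 1 x) by (unfold inI; lra).
    split; apply Rnot_lt_le; intros Hout.
    - destruct (continuous01_ivt_between f x ed c Hf Hx01 Hed ltac:(left; lra))
        as [z [Hz Hfz]].
      exact (proj1 (Hgap z ltac:(lra)) Hfz).
    - destruct (continuous01_ivt_between f x ec d Hf Hx01 Hec ltac:(right; lra))
        as [z [Hz Hfz]].
      exact (proj2 (Hgap z ltac:(lra)) Hfz). }
  intros y; unfold inI; split.
  - intros [x [Hx <-]]; unfold inI in Hx.
    destruct (Req_dec x a) as [-> | ?]; [destruct Hend; lra |].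
    destruct (Req_dec x b) as [-> | ?]; [destruct Hend; lra |].
    apply Hinside; lra.
  - intros Hy.
    destruct (continuous01_ivt f a b y Hf H0 ltac:(lra) H1) as [x Hx].
    + destruct Hend as [[-> ->] | [-> ->]]; nra.
    + exists x; exact Hx.
Qed.

Definition covers (f : R -> R) (a b c d : R) : Prop :=
  forall y, c <= y <= d -> exists x, a <= x <= b /\ f x = y.

Lemma covers_weaken f a b c d c' d' :
  covers f a b c d -> c <= c' -> d' <= d -> covers f a b c' d'.
Proof. intros Hcov Hc Hd y Hy; apply Hcov; lra. Qed.

Lemma covers_of_endpoints f a b c d :
  continuous01 f -> 0 <= a -> a <= b -> b <= 1 ->
  (f a = c /\ f b = d \/ f a = d /\ f b = c) -> covers f a b c d.
Proof.
  intros Hf H0 Hab H1 Hend y Hy.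
  apply (continuous01_ivt f a b y Hf H0 Hab H1).
  destruct Hend as [[-> ->] | [-> ->]]; nra.
Qed.

Lemma exact_subinterval f a b c d :
  continuous01 f -> 0 <= a -> b <= 1 -> c < d -> covers f a b c d ->
  exists a' b', a <= a' /\ a' < b' /\ b' <= b /\ image_eq f a' b' c d.
Proof.
  intros Hf H0 H1 Hcd Hcov.
  destruct (Hcov c) as [xc [Hxc Hfxc]]; [lra |].
  destruct (Hcov d) as [xd [Hxd Hfxd]]; [lra |].
  assert (Hne : xc <> xd) by (intros ->; lra).
  destruct (Rlt_or_le xc xd) as [Hlt | Hle].
  - destruct (level_gap f xc xd c d Hf ltac:(lra) Hlt ltac:(lra) Hfxc Hfxd ltac:(lra))
      as [a' [b' [Ha' [Hab' [Hb' [Hfa [Hfb Hgap]]]]]]].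
    exists a', b'; split; [lra | split; [lra | split; [lra |]]].
    apply image_eq_of_gap; try lra; auto.
  - destruct (level_gap f xd xc d c Hf ltac:(lra) ltac:(lra) ltac:(lra) Hfxd Hfxc ltac:(lra))
      as [a' [b' [Ha' [Hab' [Hb' [Hfa [Hfb Hgap]]]]]]].
    exists a', b'; split; [lra | split; [lra | split; [lra |]]].
    apply image_eq_of_gap; try lra; auto.
    intros x Hx; destruct (Hgap x Hx); auto.
Qed.

Definition meets_only_at_ends (a b l r : R) : Prop :=
  forall x, inI a b x -> inI l r x -> x = l \/ x = r.

Section PullbackSequences.

Variables (f : R -> R) (good : R -> R -> Prop).
Hypothesis good_proper : forall l r, good l r -> proper_subinterval l r /\ l < r.
Hypothesis good_pullback : forall l r, good l r ->
  exists l' r', good l' r' /\ image_eq f l' r' l r.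

Lemma good_pullback_sequence l0 r0 : good l0 r0 ->
  exists T : nat -> R * R, forall n, good (fst (T n)) (snd (T n)) /\
    image_eq f (fst (T (S n))) (snd (T (S n))) (fst (T n)) (snd (T n)).
Proof.
  intros Hgood0.
  (* The implication makes step total, as dependent choice requires. *)
  set (step (I J : R * R) := good (fst I) (snd I) ->
         good (fst J) (snd J) /\ image_eq f (fst J) (snd J) (fst I) (snd I)).
  assert (Hstep : forall I, exists J, step I J).
  { intros [l r]; destruct (classic (good l r)) as [Hg | Hng].
    - destruct (good_pullback l r Hg) as [l' [r' H]]; now exists (l', r').
    - exists (l, r); intros Hg; contradiction. }
  destruct (functional_choice_imp_functional_dependent_choice choice step Hstep (l0, r0))
    as [T [HT0 HT]].
  assert (Hall : forall n, good (fst (T n)) (snd (T n))).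
  { induction n as [| n IH]; [now rewrite HT0 | apply (HT n IH)]. }
  exists T; intros n; split; [apply Hall | apply (HT n (Hall n))].
Qed.

Let splitter l r (ab : R * R) :=
  0 <= fst ab /\ fst ab < snd ab /\ snd ab <= 1 /\ image_eq f (fst ab) (snd ab) l r /\
  forall l' r', good l' r' -> meets_only_at_ends (fst ab) (snd ab) l' r'.

Hypothesis good_split : forall l r, good l r -> exists ab, splitter l r ab.

(* The pullback sequence is used from index 1 on: then each term T (S n) is
   mapped onto the good interval T n, and the splitter of T n splits T (S n). *)
Lemma splitting_of_good_intervals l0 r0 : good l0 r0 -> admits_splitting_sequence f.
Proof.
  intros Hgood0.
  destruct (good_pullback_sequence l0 r0 Hgood0) as [T HT].
  destruct (choice (fun n => splitter (fst (T n)) (snd (T n)))) as [Sp HSp].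
  { intros n; apply good_split, HT. }
  exists (fun n => fst (T (S n))), (fun n => snd (T (S n))); split; [split; [| split] |].
  - intros n; apply good_proper, HT.
  - intros n; apply HT.
  - exists 0%nat; intros n _; apply good_proper, HT.
  - exists (fun _ => True), (fun n => fst (Sp n)), (fun n => snd (Sp n)); split.
    + intros m; exists m; split; [apply le_n | easy].
    + intros n _; destruct (HSp n) as [Ha [Hab [Hb [Himg Hdisj]]]].
      split; [easy | split; [easy | split; [easy | split]]].
      * apply Hdisj, HT.
      * intros y; rewrite (Himg y); symmetry; apply (proj2 (HT n)).
Qed.

End PullbackSequences.

Lemma splitting_of_covering_intervals f p1 p2 q1 q2 m1 m2 :
  continuous01 f ->
  0 <= p1 -> p1 < p2 -> p2 <= 1 -> 0 <= q1 -> q1 < q2 -> q2 <= 1 ->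
  0 <= m1 -> m1 < m2 -> m2 <= 1 ->
  covers f p1 p2 q1 q2 -> covers f q1 q2 p1 p2 ->
  covers f m1 m2 p1 p2 -> covers f m1 m2 q1 q2 ->
  (p2 <= m1 \/ m2 <= p1) -> (q2 <= m1 \/ m2 <= q1) ->
  admits_splitting_sequence f.
Proof.
  intros Hf Hp0 Hp Hp1 Hq0 Hq Hq1 Hm0 Hm Hm1 Hpq Hqp Hmp Hmq Hsidep Hsideq.
  set (good l r := l < r /\ (p1 <= l /\ r <= p2 \/ q1 <= l /\ r <= q2)).
  apply (splitting_of_good_intervals f good) with p1 p2.
  - intros l r [Hlr Hin]; split; [| easy].
    unfold proper_subinterval; split; [lra | split; [lra | split; [lra |]]]; lra.
  - intros l r [Hlr [Hin | Hin]].
    + destruct (exact_subinterval f q1 q2 l r Hf Hq0 Hq1 Hlr) as [l' [r' H]].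
      { apply (covers_weaken f q1 q2 p1 p2); easy || lra. }
      exists l', r'; unfold good; split; [lra | easy].
    + destruct (exact_subinterval f p1 p2 l r Hf Hp0 Hp1 Hlr) as [l' [r' H]].
      { apply (covers_weaken f p1 p2 q1 q2); easy || lra. }
      exists l', r'; unfold good; split; [lra | easy].
  - intros l r [Hlr Hin].
    destruct (exact_subinterval f m1 m2 l r Hf Hm0 Hm1 Hlr) as [a [b Hab]].
    { destruct Hin; [apply (covers_weaken f m1 m2 p1 p2) | apply (covers_weaken f m1 m2 q1 q2)];
        easy || lra. }
    exists (a, b); simpl.
    split; [lra | split; [lra | split; [lra | split; [easy |]]]].
    intros l' r' [Hlr' Hin'] x Hx Hx'; unfold inI in *; lra.
  - unfold good; lra.
Qed.

Lemma splitting_of_separated_two_cycles f s t u v :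
  continuous01 f -> two_cycle f s t -> two_cycle f u v -> s < t -> t < u -> u < v ->
  admits_splitting_sequence f.
Proof.
  intros Hf [Hs [Ht [_ [Fs Ft]]]] [Hu [Hv [_ [Fu Fv]]]] Hst Htu Huv; unfold inI in *.
  assert (Hcyc : covers f s t s t) by (apply covers_of_endpoints; auto; lra).
  assert (Hbridge : covers f t u s t).
  { apply (covers_weaken f t u s v); [apply covers_of_endpoints |..]; auto; lra. }
  apply (splitting_of_covering_intervals f s t s t t u); auto; lra.
Qed.

Lemma splitting_of_interleaved_two_cycles f s t u v :
  continuous01 f -> two_cycle f s t -> two_cycle f u v -> s < u -> u < t -> t < v ->
  admits_splitting_sequence f.
Proof.
  intros Hf [Hs [Ht [_ [Fs Ft]]]] [Hu [Hv [_ [Fu Fv]]]] Hsu Hut Htv; unfold inI in *.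
  assert (Hsu_tv : covers f s u t v) by (apply covers_of_endpoints; auto; lra).
  assert (Htv_su : covers f t v s u) by (apply covers_of_endpoints; auto; lra).
  assert (Hut_sv : covers f u t s v) by (apply covers_of_endpoints; auto; lra).
  apply (splitting_of_covering_intervals f s u t v u t); auto; try lra;
    apply (covers_weaken f u t s v); auto; lra.
Qed.

Lemma distinct_two_cycles_disjoint f s t u v :
  two_cycle f s t -> two_cycle f u v -> s < t -> u < v -> ~ (s = u /\ t = v) ->
  s <> u /\ s <> v /\ t <> u /\ t <> v.
Proof.
  intros [_ [_ [_ [Fs Ft]]]] [_ [_ [_ [Fu Fv]]]] Hst Huv Hne.
  split; [intros -> | split; [intros -> | split; intros ->]].
  - apply Hne; split; congruence.
  - assert (t = u) by congruence; lra.
  - assert (s = v) by congruence; lra.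
  - apply Hne; split; congruence.
Qed.

Theorem lemma3p13 (f : R -> R) :
  self_map01 f -> continuous01 f -> surjective01 f ->
  ~ admits_splitting_sequence f ->
  forall s t u v : R,
    two_cycle f s t -> two_cycle f u v -> s < t -> u < v ->
    ~ (s = u /\ t = v) ->
    (s < u /\ u < v /\ v < t) \/ (u < s /\ s < t /\ t < v).
Proof.
  intros _ Hf _ Hnosplit s t u v Hst Huv Hlt_st Hlt_uv Hne.
  destruct (distinct_two_cycles_disjoint f s t u v Hst Huv Hlt_st Hlt_uv Hne)
    as [Hsu [Hsv [Htu Htv]]].
  destruct (Rlt_or_le t u).
  { exfalso; apply Hnosplit, (splitting_of_separated_two_cycles f s t u v); auto. }
  destruct (Rlt_or_le v s).
  { exfalso; apply Hnosplit, (splitting_of_separated_two_cycles f u v s t); auto. }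
  destruct (Rlt_or_le s u); [destruct (Rlt_or_le t v) | destruct (Rlt_or_le v t)]; try lra.
  - exfalso; apply Hnosplit, (splitting_of_interleaved_two_cycles f s t u v); auto; lra.
  - exfalso; apply Hnosplit, (splitting_of_interleaved_two_cycles f u v s t); auto; lra.
Qed.
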